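(* Under Assumptions A1–A4, with $(\beta_t)$ positive and $\beta_t\to\infty$, the BOKE+ iterates $\bm{X}_t$ satisfy: (i) for a fixed bandwidth $\ell_t\equiv\ell$, $\inf_t h_{\mathcal{X},\bm{X}_t}\le R_\Psi\ell$ almost surely; (ii) there exists a bandwidth sequence $\ell_t\to0$ such that $\inf_t h_{\mathcal{X},\bm{X}_t}=0$ almost surely.
   Context: Standing setup. A1: $\mathcal{X}\subset\mathbb{R}^d$ compact, convex, nonempty interior. A2: $f$ continuous on $\mathcal{X}$. A3: kernel $k(\bm{x},\bm{x}')=\Psi((\bm{x}-\bm{x}')/\ell)$, $\Psi\ge0$ with support in $B(\bm{0},R_\Psi)$, continuous at $\bm{0}$, $\Psi(\bm{0})>0$, $\sup\Psi\le M_\Psi$. A4: independent zero-mean sub-Gaussian noises with parameter $\varsigma$. $W_t(\bm{x})=\sum_ik(\bm{x},\bm{x}_i)$; $m_t$ is kernel regression $\sum_ik(\bm{x},\bm{x}_i)y_i/W_t(\bm{x})$, extended by the nearest-neighbor average where $W_t=0$; $\hat\sigma_t=W_t^{-1/2}$ (with $c/0=\infty$). BOKE+ with parameter $p\in(0,1]$: at each iteration $t\ge T_0$ draw independently $q\sim\mathrm{Bernoulli}(p)$; if $q=1$ set $\bm{x}_{t+1}\in\arg\max_{\mathcal{X}}(m_t+\beta_t\hat\sigma_t)$, otherwise $\bm{x}_{t+1}\in\arg\max_{\mathcal{X}}m_t$; observe $y_{t+1}=f(\bm{x}_{t+1})+\varepsilon_{t+1}$. Fill distance $h_{\mathcal{X},\bm{X}_t}=\sup_{\bm{x}\in\mathcal{X}}\min_{i\le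 t}\|\bm{x}-\bm{x}_i\|$. *)

From HB Require Import structures.
From mathcomp Require Import all_boot all_order all_algebra.
From mathcomp Require Import all_classical all_reals all_analysis.
Set Implicit Arguments. Unset Strict Implicit. Unset Printing Implicit Defensive.
Import Order.TTheory GRing.Theory Num.Theory.
Import numFieldNormedType.Exports.
Local Open Scope classical_set_scope.
Local Open Scope ring_scope.

Section BOKE.
Variables (R : realType) (d : nat).
Notation V := 'rV[R]_d.

(* Euclidean norm on R^d (the library norm on 'rV is the max norm). *)
Definition enorm (v : V) : R := Num.sqrt (\sum_(i < d) v ord0 i ^+ 2).

Definition convex_set (X : set V) : Prop :=
  forall x y (lam : R), X x -> X y -> 0 <= lam <= 1 ->
    X (lam *: x + (1 - lam) *: y).

Definition A1 (X : set V) : Prop :=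
  compact X /\ convex_set X /\ interior X !=set0.

Definition A3 (Psi : V -> R) (RPsi MPsi : R) : Prop :=
  0 < RPsi /\
  (forall z, 0 <= Psi z) /\
  (forall z, RPsi < enorm z -> Psi z = 0) /\
  (Psi x @[x --> (0 : V)] --> Psi 0) /\
  0 < Psi 0 /\
  (forall z, Psi z <= MPsi).

Definition kern (Psi : V -> R) (ell : R) (x x' : V) : R := Psi (ell^-1 *: (x - x')).

Definition Wt (Psi : V -> R) (ell : R) (t : nat) (xs : nat -> V) (x : V) : R :=
  \sum_(i < t) kern Psi ell x (xs i).

Definition dmin (t : nat) (xs : nat -> V) (x : V) : R :=
  \big[Order.min/enorm (x - xs 0%N)]_(i < t) enorm (x - xs i).

Definition nn_avg (t : nat) (xs : nat -> V) (ys : nat -> R) (x : V) : R :=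
  (\sum_(i < t | enorm (x - xs i) == dmin t xs x) ys i) /
  (#|[pred i : 'I_t | enorm (x - xs i) == dmin t xs x]|)%:R.

Definition mt (Psi : V -> R) (ell : R) (t : nat) (xs : nat -> V) (ys : nat -> R)
  (x : V) : R :=
  if Wt Psi ell t xs x == 0 then nn_avg t xs ys x
  else (\sum_(i < t) kern Psi ell x (xs i) * ys i) / Wt Psi ell t xs x.

Definition ucb (Psi : V -> R) (ell beta : R) (t : nat) (xs : nat -> V)
  (ys : nat -> R) (x : V) : \bar R :=
  if Wt Psi ell t xs x == 0 then +oo%E
  else (mt Psi ell t xs ys x + beta / Num.sqrt (Wt Psi ell t xs x))%:E.

Definition is_argmax (X : set V) (g : V -> \bar R) (x : V) : Prop :=
  X x /\ forall z, X z -> (g z <= g x)%E.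

(* fill distance h_{X, X_t} = sup_{x in X} min_{i < t} ||x - x_i|| (= +oo if t = 0) *)
Definition fill_dist (X : set V) (xs : nat -> V) (t : nat) : \bar R :=
  ereal_sup [set \big[Order.min/+oo%E]_(i < t) (enorm (x - xs i))%:E | x in X].

Section Prob.
Context {d0 : measure_display} {T : measurableType d0} (P : probability T R).

Definition mutually_independent (I : eqType) (Z : I -> T -> R) : Prop :=
  (forall j, measurable_fun setT (Z j)) /\
  forall (J : seq I) (B : I -> set R), uniq J -> (forall j, measurable (B j)) ->
    P (\bigcap_(j in [set` J]) (Z j @^-1` B j)) =
    (\prod_(j <- J) P (Z j @^-1` B j))%E.

Definition bernoulli_seq (p : R) (q : nat -> T -> R) : Prop :=
  forall t, measurable_fun setT (q t) /\ (forall w, q t w = 0 \/ q t w = 1) /\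
    P [set w | q t w = 1] = p%:E.

Definition subgaussian_noise (vs : R) (eps : nat -> T -> R) : Prop :=
  forall t, measurable_fun setT (eps t) /\
    P.-integrable setT (EFin \o eps t) /\
    (\int[P]_w (eps t w)%:E = 0)%E /\
    forall lam : R, (\int[P]_w (expR (lam * eps t w))%:E <=
                     (expR (lam ^+ 2 * vs ^+ 2 / 2))%:E)%E.

Definition indep_q_eps (q eps : nat -> T -> R) : Prop :=
  mutually_independent
    (fun j : nat + nat => match j with inl t => q t | inr i => eps i end).

(* The BOKE+ iterates: xs i (i < T0) is the initial design x_1..x_T0,
   and for t >= T0, xs t = x_{t+1} is chosen from the data xs 0..t-1. *)
Definition boke_plus_run (X : set V) (f : V -> R) (Psi : V -> R)
  (ell beta : nat -> R) (T0 : nat) (q eps : nat -> T -> R)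
  (xs : nat -> T -> V) : Prop :=
  (forall w i, (i < T0)%N -> X (xs i w)) /\
  (forall w t, (T0 <= t)%N ->
     let ys := fun i => f (xs i w) + eps i w in
     if q t w == 1
     then is_argmax X (ucb Psi (ell t) (beta t) t (fun i => xs i w) ys) (xs t w)
     else is_argmax X (fun x => (mt Psi (ell t) t (fun i => xs i w) ys x)%:E)
                      (xs t w)).

End Prob.
End BOKE.

(* While the fill distance at time t exceeds RPsi * ell, some point of X lies
   outside the supports of all kernels centred at the design points, so the UCB
   criterion equals +oo there.  A UCB step taken in that regime therefore picks
   a point outside those supports too, i.e. at distance >= r0 * ell from every
   previous design point, where Psi > 0 on the ball of radius r0.  As X is
   compact, at most N points of X are pairwise (r0 * ell)-separated, so among
   any N + 1 UCB steps with bandwidth ell one sees a fill distance <= RPsi * ell.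
   UCB steps are independent Bernoulli(p) events, so some of N + 1 consecutive
   blocks of length L contains none with probability at most
   (N + 1) (1 - p)^L, which tends to 0 as L grows: this gives (i).
   For (ii) the bandwidth equals 1/(k+1) on a k-th stretch made of N_k + 1
   blocks whose length L_k brings that failure probability below 1/(k+1); almost
   surely infinitely many stretches succeed, so the infimum of the fill
   distances is below RPsi/(k+1) for infinitely many k. *)
From HB Require Import structures.
From mathcomp Require Import all_boot all_order all_algebra.
From mathcomp Require Import all_classical all_reals all_analysis.
From mathcomp Require Import ring lra zify.
Import Order.TTheory GRing.Theory Num.Theory.
Import numFieldNormedType.Exports.
Local Open Scope classical_set_scope.
Local Open Scope ring_scope.

Set Implicit Arguments. Unset Strict Implicit. Unset Printing Implicit Defensive.

Section euclidean_norm.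
Variables (R : realType) (d : nat).
Implicit Types (u v : 'rV[R]_d) (c : R).

Lemma enorm_ge0 v : 0 <= enorm v.
Proof. exact: sqrtr_ge0. Qed.

Lemma enormZ c v : enorm (c *: v) = `|c| * enorm v.
Proof.
rewrite /enorm (eq_bigr (fun i => c ^+ 2 * v ord0 i ^+ 2)); last first.
  by move=> i _; rewrite mxE exprMn.
by rewrite -mulr_sumr sqrtrM ?sqr_ge0 // sqrtr_sqr.
Qed.

Lemma enormBC u v : enorm (u - v) = enorm (v - u).
Proof. by rewrite -opprB -scaleN1r enormZ normrN normr1 mul1r. Qed.

Lemma mx_normr_coord v i : `|v ord0 i| <= `|v|.
Proof.
rewrite [leRHS]/Num.Def.normr /= mx_normrE.
by apply/bigmax_geP; right; exists (ord0, i).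
Qed.

Lemma normr_le_enorm v : `|v| <= enorm v.
Proof.
rewrite [leLHS]/Num.Def.normr /= mx_normrE; apply: bigmax_le; first exact: enorm_ge0.
move=> [i j] _ /=; rewrite (ord1 i) -sqrtr_sqr ler_sqrt; last first.
  by apply: sumr_ge0 => k _; rewrite sqr_ge0.
by rewrite (bigD1 j) //= lerDl sumr_ge0 // => k _; rewrite sqr_ge0.
Qed.

Lemma enorm_le_normr v : enorm v <= d.+1%:R * `|v|.
Proof.
rewrite -[leRHS]ger0_norm ?mulr_ge0 // -sqrtr_sqr /enorm ler_sqrt ?sqr_ge0 //.
apply: (@le_trans _ _ (\sum_(i < d) `|v| ^+ 2)).
  apply: ler_sum => i _; rewrite -real_normK ?num_real //.
  by rewrite lerXn2r ?nnegrE // mx_normr_coord.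
rewrite sumr_const card_ord -[_ *+ d]mulr_natl exprMn ler_wpM2r ?sqr_ge0 //.
by rewrite -natrX ler_nat -addn1 sqrnD; lia.
Qed.

End euclidean_norm.

Section packing.
Variables (R : realType) (d : nat).
Notation V := 'rV[R]_d.

Definition packing_bound (X : set V) (delta : R) (N : nat) : Prop :=
  forall s : seq V, (forall x, x \in s -> X x) ->
    pairwise (fun x y => delta <= enorm (x - y)) s -> (size s <= N)%N.

(* Max-norm radius small enough for balls of Euclidean diameter < delta. *)
Let rad (delta : R) := delta / (2 * d.+1%:R).

Lemma enorm_lt_in_ball (delta : R) (c x y : V) : 0 < delta ->
  ball c (rad delta) x -> ball c (rad delta) y -> enorm (x - y) < delta.
Proof.
move=> delta0; rewrite -!ball_normE /= => cx cy.
apply: le_lt_trans (enorm_le_normr _) _.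
have -> : delta = d.+1%:R * (rad delta + rad delta).
  by rewrite /rad; field; rewrite addrC natr1 pnatr_eq0.
rewrite ltr_pM2l ?ltr0Sn // -(subrK c x) -addrA.
by apply: le_lt_trans (ler_normD _ _) _; rewrite distrC ltrD.
Qed.

Lemma separated_size_le_centers (delta : R) (cs s : seq V) : 0 < delta ->
  (forall x, x \in s -> exists2 c, c \in cs & ball c (rad delta) x) ->
  pairwise (fun x y => delta <= enorm (x - y)) s -> (size s <= size cs)%N.
Proof.
move=> delta0; elim: s cs => [//|x s IH] cs cover /= /andP[far_x sep_s].
have [c cin cx] := cover x (mem_head _ _).
suff : (size s <= (size cs).-1)%N by case: (cs) cin.
rewrite -(size_rem cin).
apply: IH _ sep_s => y ys; have ys' : y \in x :: s by rewrite inE ys orbT.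
have [c' c'in c'y] := cover y ys'.
exists c' => //; move: c'in; rewrite (perm_mem (perm_to_rem cin)) inE.
case/orP=> [/eqP c'c|//]; move: (allP far_x y ys).
by rewrite leNgt (enorm_lt_in_ball delta0 cx) // -c'c.
Qed.

Lemma compact_packing_bound (X : set V) (delta : R) : compact X -> 0 < delta ->
  exists N, packing_bound X delta N.
Proof.
rewrite compact_cover => cX delta0.
have rad0 : 0 < rad delta by rewrite divr_gt0 // mulr_gt0 // ltr0n.
have [|D _ cover] := cX V X (fun c => ball c (rad delta)) (fun c _ => ball_open c _).
  by move=> x Xx; exists x => //; exact: ballxx.
exists (size (finmap.enum_fset D)) => s sX sep.
apply: separated_size_le_centers delta0 _ sep => x xs.
by have [c /= cD cx] := cover x (sX x xs); exists c.
Qed.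

End packing.

Section fill_distance.
Variables (R : realType) (d : nat).
Notation V := 'rV[R]_d.

Lemma fill_dist_le (X : set V) (xs : nat -> V) t (c : R) :
  (forall x, X x -> exists i : 'I_t, enorm (x - xs i) <= c) ->
  (fill_dist X xs t <= c%:E)%E.
Proof.
move=> near; apply: ge_ereal_sup => _ [x Xx <-].
have [i xi] := near x Xx.
by apply: le_trans (bigmin_le _ i _) _; rewrite lee_fin.
Qed.

Lemma fill_dist_ge0 (X : set V) (xs : nat -> V) t :
  X !=set0 -> (0 <= fill_dist X xs t)%E.
Proof.
move=> [x Xx]; apply: le_trans (ereal_sup_ubound (ex_intro2 _ _ x Xx erefl)).
by apply: le_bigmin => // i _; rewrite lee_fin enorm_ge0.
Qed.

End fill_distance.

Section kernel.
Variables (R : realType) (d : nat).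
Notation V := 'rV[R]_d.
Variables (Psi : V -> R) (RPsi MPsi : R).
Hypothesis Psi_A3 : A3 Psi RPsi MPsi.

Lemma A3_Psi_gt0_near0 : exists2 r0 : R, 0 < r0 & forall z, enorm z < r0 -> 0 < Psi z.
Proof.
case: Psi_A3 => _ [_ [_ [Psi_cont [Psi0 _]]]].
have Psi0_half : 0 < Psi 0 / 2 by rewrite divr_gt0.
have [r r0 near0] := (nbhs_ballP _ _).1 (cvgr_dist_lt _ _ Psi_cont _ Psi0_half).
exists r => // z zr.
have /near0 : ball (0 : V) r z.
  by rewrite -ball_normE /= sub0r normrN (le_lt_trans (normr_le_enorm z)).
by rewrite /= ltr_norml => /andP[_ ?]; lra.
Qed.

Lemma kern_eq0_far (ell : R) (x x' : V) : 0 < ell ->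
  RPsi * ell < enorm (x - x') -> kern Psi ell x x' = 0.
Proof.
case: Psi_A3 => _ [_ [Psi_supp _]] ell0 far; apply: Psi_supp.
by rewrite enormZ ger0_norm ?invr_ge0 ?ltW // ltr_pdivlMl // mulrC.
Qed.

Lemma kern_gt0_near (r0 ell : R) (x x' : V) :
  (forall z, enorm z < r0 -> 0 < Psi z) -> 0 < ell ->
  enorm (x - x') < r0 * ell -> 0 < kern Psi ell x x'.
Proof.
move=> Psi_pos ell0 near; apply: Psi_pos.
by rewrite enormZ ger0_norm ?invr_ge0 ?ltW // ltr_pdivrMl // mulrC.
Qed.

Lemma Wt_eq0_far_from_design (ell : R) (X : set V) (xs : nat -> V) t :
  0 < ell -> ((RPsi * ell)%:E < fill_dist X xs t)%E ->
  exists2 x, X x & Wt Psi ell t xs x = 0.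
Proof.
move=> ell0 fill_gt; apply: contrapT => noW; move: fill_gt; apply/negP.
rewrite -leNgt; apply: fill_dist_le => x Xx; apply: contrapT => far.
apply: noW; exists x => //; apply: big1 => i _; apply: kern_eq0_far => //.
by rewrite ltNge; apply/negP => xi; apply: far; exists i.
Qed.

Lemma Wt_eq0_separated (r0 ell : R) (xs : nat -> V) t (x : V) :
  (forall z, enorm z < r0 -> 0 < Psi z) -> 0 < ell ->
  Wt Psi ell t xs x = 0 -> forall i : 'I_t, r0 * ell <= enorm (x - xs i).
Proof.
case: Psi_A3 => _ [Psi_ge0 _] Psi_pos ell0 /psumr_eq0P W0 i.
rewrite leNgt; apply/negP => /(kern_gt0_near Psi_pos ell0).
by rewrite W0 ?ltxx // => j _; apply: Psi_ge0.
Qed.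

(* [ucb] is [+oo] exactly where [Wt] vanishes, so a UCB maximiser over [X]
   lies off the kernel supports as soon as some point of [X] does. *)
Lemma ucb_argmax_Wt_eq0 (X : set V) (ell beta : R) t (xs : nat -> V)
    (ys : nat -> R) (x xt : V) :
  is_argmax X (ucb Psi ell beta t xs ys) xt -> X x ->
  Wt Psi ell t xs x = 0 -> Wt Psi ell t xs xt = 0.
Proof.
move=> [_ max_xt] Xx W0; have := max_xt x Xx.
by rewrite {1}/ucb W0 eqxx leye_eq /ucb; case: ifPn => [/eqP|].
Qed.

End kernel.

Lemma count_iota_blocks (P : pred nat) (a L N : nat) :
  (forall k, (k <= N)%N -> has P (iota (a + k * L) L)) ->
  (N < count P (iota a (N.+1 * L)))%N.
Proof.
elim: N => [|N IH] hasP.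
  by have := hasP 0%N isT; rewrite mul0n addn0 mul1n has_count.
rewrite mulSnr iotaD count_cat -addn1 leq_add ?IH -?has_count ?hasP //.
by move=> k kN; rewrite hasP // (leq_trans kN).
Qed.

Section boke_plus_iterates.
Variables (R : realType) (d : nat).
Notation V := 'rV[R]_d.
Variables (X : set V) (f Psi : V -> R) (RPsi MPsi r0 : R) (ell beta : nat -> R).
Variables (T0 : nat) (d0 : measure_display) (T : measurableType d0).
Variables (q eps : nat -> T -> R) (xs : nat -> T -> V).
Hypotheses (Psi_A3 : A3 Psi RPsi MPsi) (Psi_pos : forall z, enorm z < r0 -> 0 < Psi z).
Hypothesis run : boke_plus_run X f Psi ell beta T0 q eps xs.

Lemma ucb_step_separated w t : (T0 <= t)%N -> q t w = 1 -> 0 < ell t ->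
  ((RPsi * ell t)%:E < fill_dist X (fun i => xs i w) t)%E ->
  X (xs t w) /\ forall i : 'I_t, r0 * ell t <= enorm (xs t w - xs i w).
Proof.
move=> T0t qt1 ell0 fill_gt.
have := run.2 w t T0t; rewrite /= qt1 eqxx => xt_max.
split; first by case: xt_max.
have [x Xx W0] := Wt_eq0_far_from_design Psi_A3 ell0 fill_gt.
move=> i; exact: (Wt_eq0_separated Psi_A3 Psi_pos ell0 (ucb_argmax_Wt_eq0 xt_max Xx W0) i).
Qed.

(* The UCB points chosen while the fill distance exceeds [RPsi * e] are
   [r0 * e]-separated, so there can be at most [N] of them. *)
Lemma ucb_steps_fill_dist_le w e N (ts : seq nat) : 0 < e ->
  packing_bound X (r0 * e) N -> (N < size ts)%N -> sorted ltn ts ->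
  (forall t, t \in ts -> [/\ (T0 <= t)%N, q t w = 1 & ell t = e]) ->
  exists t, (fill_dist X (fun i => xs i w) t <= (RPsi * e)%:E)%E.
Proof.
move=> e0 pack sizeN ts_sorted ts_ucb; apply: contrapT => fill_gt.
have sep t : t \in ts ->
    X (xs t w) /\ forall i : 'I_t, r0 * e <= enorm (xs t w - xs i w).
  move=> tts; have [T0t qt1 ellt] := ts_ucb t tts; rewrite -ellt.
  apply: ucb_step_separated; rewrite ?ellt //.
  by rewrite ltNge; apply/negP => le; apply: fill_gt; exists t.
suff : (size [seq xs t w | t <- ts] <= N)%N by rewrite size_map leqNgt sizeN.
apply: pack; first by move=> _ /mapP[t tts ->]; case: (sep t tts).
rewrite pairwise_map; move: ts_sorted; rewrite sorted_pairwise; last exact: ltn_trans.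
apply: (sub_in_pairwise (P := mem ts)) (allss ts) => t t' _ t'ts tt'.
by rewrite /= enormBC; apply: (sep t' t'ts).2 (Ordinal tt').
Qed.

Lemma ucb_window_fill_dist_le w e (a L N : nat) : 0 < e ->
  packing_bound X (r0 * e) N -> (T0 <= a)%N ->
  (forall t, (a <= t < a + N.+1 * L)%N -> ell t = e) ->
  (forall k, (k <= N)%N -> has (fun t => q t w == 1) (iota (a + k * L) L)) ->
  exists t, (fill_dist X (fun i => xs i w) t <= (RPsi * e)%:E)%E.
Proof.
move=> e0 pack T0a ell_e blocks_hit.
pose ts := [seq t <- iota a (N.+1 * L) | q t w == 1].
apply: (@ucb_steps_fill_dist_le w e N ts e0 pack).
- by rewrite size_filter count_iota_blocks.
- exact/sorted_filter/iota_ltn_sorted/ltn_trans.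
- move=> t; rewrite mem_filter mem_iota => /andP[/eqP qt1 /andP[a_le_t t_lt]].
  by split; rewrite ?ell_e ?a_le_t ?t_lt // (leq_trans T0a).
Qed.

End boke_plus_iterates.

Section ucb_coin_flips.
Variables (R : realType) (d0 : measure_display) (T : measurableType d0).
Variables (P : probability T R) (p : R) (q eps : nat -> T -> R).
Hypotheses (q_bernoulli : bernoulli_seq P p q) (q_eps_indep : indep_q_eps P q eps).

Definition no_ucb_step (a L : nat) : set T :=
  \big[setI/setT]_(t <- iota a L) q t @^-1` [set 0].

Definition some_block_without_ucb (a L N : nat) : set T :=
  \big[setU/set0]_(k < N.+1) no_ucb_step (a + k * L) L.

Lemma q_eq0_setC t : q t @^-1` [set 0] = ~` [set w | q t w = 1].
Proof.
have [_ [q01 _]] := q_bernoulli t; apply/seteqP; split => w /=.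
  by move=> -> /eqP; rewrite eq_sym oner_eq0.
by case: (q01 w).
Qed.

Lemma measurable_q_eq t (r : R) : measurable (q t @^-1` [set r]).
Proof.
have [q_meas _] := q_bernoulli t.
by rewrite -[_ @^-1` _]setTI; apply: q_meas.
Qed.

Lemma measurable_no_ucb_step a L : measurable (no_ucb_step a L).
Proof. by apply: bigsetI_measurable => t _; apply: measurable_q_eq. Qed.

Lemma probability_no_ucb_step a L : P (no_ucb_step a L) = ((1 - p) ^+ L)%:E.
Proof.
have [_ indep] := q_eps_indep.
have := indep [seq inl t | t <- iota a L] (fun=> [set 0]).
rewrite map_inj_uniq ?iota_uniq; last by move=> ? ? [].
rewrite bigcap_seq big_map => /(_ isT (fun=> measurable_set1 0)) ->.
rewrite big_map (eq_bigr (fun=> (1 - p)%:E)) => [|t _].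
  by rewrite prodEFin big_const_seq count_predT size_iota iter_mulr mulr1.
have [_ [_ Pq1]] := q_bernoulli t.
by rewrite /= q_eq0_setC probability_setC ?Pq1 //; apply: measurable_q_eq.
Qed.

Lemma measurable_some_block_without_ucb a L N :
  measurable (some_block_without_ucb a L N).
Proof. by apply: bigsetU_measurable => k _; apply: measurable_no_ucb_step. Qed.

Lemma probability_some_block_without_ucb_le a L N :
  (P (some_block_without_ucb a L N) <= (N.+1%:R * (1 - p) ^+ L)%:E)%E.
Proof.
apply: le_trans (@Boole_inequality _ _ _ P (fun k => no_ucb_step (a + k * L) L) N.+1 _) _.
  by move=> k _; apply: measurable_no_ucb_step.
rewrite (eq_bigr _ (fun k _ => probability_no_ucb_step _ _)).
by rewrite sumEFin sumr_const card_ord mulr_natl.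
Qed.

Lemma ucb_step_in_each_block w a L N : ~ some_block_without_ucb a L N w ->
  forall k, (k <= N)%N -> has (fun t => q t w == 1) (iota (a + k * L) L).
Proof.
move=> not_some k kN; apply/hasP; apply: contrapT => no_step; apply: not_some.
rewrite /some_block_without_ucb -(bigcup_mkord _ (fun k => no_ucb_step (a + k * L) L)).
exists k => //; rewrite /no_ucb_step -bigcap_seq => t tin /=.
have [_ [q01 _]] := q_bernoulli t.
by case: (q01 w) => // qt1; case: no_step; exists t; rewrite ?qt1.
Qed.

End ucb_coin_flips.

Lemma negligible_bigcap_small (R : realType) (d0 : measure_display)
    (T : measurableType d0) (mu : {measure set T -> \bar R})
    (E : nat -> set T) (D : set nat) :
  (forall m, measurable (E m)) ->
  (forall e : R, 0 < e -> exists2 m, D m & (mu (E m) <= e%:E)%E) ->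
  mu.-negligible (\bigcap_(m in D) E m).
Proof.
move=> E_meas small; have capE_meas : measurable (\bigcap_(m in D) E m).
  by apply: bigcap_measurableType => m _; apply: E_meas.
apply/negligibleP => //; apply/eqP; rewrite eq_le measure_ge0 andbT.
apply/lee_addgt0Pr => e e0; rewrite add0e; have [m Dm muE] := small e e0.
by apply: le_trans muE; apply: le_measure; rewrite ?inE // => w /(_ m Dm).
Qed.

Lemma geometric_eventually_le (R : realType) (x c e : R) : 0 <= x < 1 -> 0 < e ->
  exists m, forall n, (m <= n)%N -> c * x ^+ n <= e.
Proof.
move=> /andP[x0 x1] e0.
have cx : (fun n => c * x ^+ n) @ \oo --> 0.
  by rewrite -(mulr0 c); apply: cvgM; [exact: cvg_cst|apply: cvg_expr; rewrite ger0_norm].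
have [m _ small] := cvgr_dist_lt _ _ cx _ e0.
exists m => n mn; apply: le_trans (ler_norm _) _.
by rewrite -normrN -sub0r ltW // small.
Qed.

Lemma fixed_bandwidth_fill_dist_le (R : realType) (d : nat) (X : set 'rV[R]_d)
    (f Psi : 'rV[R]_d -> R) (RPsi MPsi : R) (beta : nat -> R) (p : R) (T0 : nat)
    (ell : R) (d0 : measure_display) (T : measurableType d0) (P : probability T R)
    (q eps : nat -> T -> R) (xs : nat -> T -> 'rV[R]_d) :
  compact X -> A3 Psi RPsi MPsi -> 0 < p <= 1 -> 0 < ell ->
  bernoulli_seq P p q -> indep_q_eps P q eps ->
  boke_plus_run X f Psi (fun=> ell) beta T0 q eps xs ->
  {ae P, forall w, (ereal_inf (range (fill_dist X (fun i => xs i w)))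
                    <= (RPsi * ell)%:E)%E}.
Proof.
move=> cX Psi_A3 /andP[p0 p1] ell0 q_bern indep run.
have q01 : 0 <= 1 - p < 1 by apply/andP; split; lra.
have [r0 r00 Psi_pos] := A3_Psi_gt0_near0 Psi_A3.
have [N pack] := compact_packing_bound cX (mulr_gt0 r00 ell0).
apply: negligibleS (negligible_bigcap_small (D := setT)
  (E := fun L => some_block_without_ucb q T0 L N) _ _).
- move=> w /= fill_gt L _ /=; apply: contrapT => not_some.
  have hit k kN := ucb_step_in_each_block q_bern not_some (k := k) kN.
  apply: fill_gt; apply: ge_ereal_inf.
  have [t fill_le] := ucb_window_fill_dist_le Psi_A3 Psi_pos run ell0 pack (leqnn _)
    (fun _ _ => erefl) hit.
  by exists (fill_dist X (fun i => xs i w) t) => //; exists t.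
- by move=> L; apply: measurable_some_block_without_ucb.
- move=> e e0; have [L small] := geometric_eventually_le N.+1%:R q01 e0.
  exists L => //.
  apply: le_trans (probability_some_block_without_ucb_le q_bern indep _ _ _) _.
  by rewrite lee_fin small.
Qed.

Lemma sum_ord_ltn (t K : nat) : (\sum_(k < t) (k < K))%N = minn t K.
Proof.
by elim: t => [|t IH]; rewrite ?big_ord0 ?min0n // big_ord_recr /= IH; case: ltnP; lia.
Qed.

Section step_index.
Variable s : nat -> nat.
Hypothesis s_incr : forall k, (s k < s k.+1)%N.

(* The index [k] of the step [[s k, s k.+1)] containing [t]. *)
Definition step_index (t : nat) : nat := (\sum_(k < t) (s k.+1 <= t))%N.

Let s_le : {homo s : m n / (m <= n)%N}.
Proof. by apply: homo_leq => [//|n m o|k]; [apply: leq_trans|apply: ltnW]. Qed.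

Let leq_s k : (k <= s k)%N.
Proof. by elim: k => // k IH; apply: leq_ltn_trans IH (s_incr k). Qed.

Lemma step_index_ge K t : (s K <= t)%N -> (K <= step_index t)%N.
Proof.
move=> sKt; rewrite -[X in (X <= _)%N](minn_idPr (leq_trans (leq_s K) sKt)).
rewrite -sum_ord_ltn leq_sum // => j _; case: ltnP => //= jK.
by rewrite (leq_trans (s_le jK) sKt).
Qed.

Lemma step_indexE k t : (s k <= t < s k.+1)%N -> step_index t = k.
Proof.
move=> /andP[skt tsk]; rewrite -[RHS](minn_idPr (leq_trans (leq_s k) skt)).
rewrite -sum_ord_ltn; apply: eq_bigr => j _; congr nat_of_bool.
apply/idP/idP => [sjt|jk]; last exact: leq_trans (s_le jk) skt.
rewrite ltnNge; apply/negP; rewrite -ltnS => /s_le kj.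
by move: tsk; rewrite ltnNge (leq_trans kj sjt).
Qed.

End step_index.

Lemma ereal_eq0_le_vanishing (R : realType) (x : \bar R) (u : nat -> R) :
  (0 <= x)%E -> u @ \oo --> 0 ->
  (forall K, exists2 k, (K <= k)%N & (x <= (u k)%:E)%E) -> x = 0%E.
Proof.
move=> x0 u0 often; apply/eqP; rewrite eq_le x0 andbT; apply/lee_addgt0Pr => e e0.
have [K _ small] := cvgr_dist_lt _ _ u0 _ e0; have [k Kk xk] := often K.
rewrite add0e (le_trans xk) // lee_fin (le_trans (ler_norm _)) // ltW //.
by rewrite -normrN -sub0r small.
Qed.

Section vanishing_bandwidth.
Variables (R : realType) (d : nat).
Notation V := 'rV[R]_d.
Variables (X : set V) (f Psi : V -> R) (RPsi MPsi r0 : R) (beta : nat -> R).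
Variables (p : R) (T0 : nat) (N L : nat -> nat).
Hypotheses (X0 : X !=set0) (Psi_A3 : A3 Psi RPsi MPsi).
Hypothesis Psi_pos : forall z, enorm z < r0 -> 0 < Psi z.
Hypothesis packN : forall k, packing_bound X (r0 * harmonic k) (N k).
Hypotheses (L_gt0 : forall k, (0 < L k)%N)
  (L_small : forall k, (N k).+1%:R * (1 - p) ^+ L k <= harmonic k).

(* Step [k] of the schedule lasts [N k + 1] blocks of length [L k], long enough
   for [N k + 1] UCB steps with probability at least [1 - harmonic k]. *)
Definition schedule_start (k : nat) : nat := (T0 + \sum_(i < k) (N i).+1 * L i)%N.

Definition schedule_bandwidth (t : nat) : R :=
  harmonic (step_index schedule_start t).

Lemma schedule_startS k :
  schedule_start k.+1 = (schedule_start k + (N k).+1 * L k)%N.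
Proof. by rewrite /schedule_start big_ord_recr addnA. Qed.

Lemma schedule_start_incr k : (schedule_start k < schedule_start k.+1)%N.
Proof. by rewrite schedule_startS -[X in (X < _)%N]addn0 ltn_add2l muln_gt0 L_gt0. Qed.

Lemma schedule_bandwidth_gt0 t : 0 < schedule_bandwidth t.
Proof. exact: harmonic_gt0. Qed.

Lemma schedule_bandwidth_cvg0 : schedule_bandwidth @ \oo --> 0.
Proof.
apply/cvgrPdist_lt => e e0; have [K _ small] := cvgr_dist_lt _ _ cvg_harmonic _ e0.
exists (schedule_start K) => // t /= Kt; apply: small.
exact: step_index_ge schedule_start_incr _ _ Kt.
Qed.

Lemma schedule_bandwidth_on_step k t :
  (schedule_start k <= t < schedule_start k + (N k).+1 * L k)%N ->
  schedule_bandwidth t = harmonic k.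
Proof.
by rewrite /schedule_bandwidth -schedule_startS => /(step_indexE schedule_start_incr) ->.
Qed.

Lemma schedule_bandwidth_fill_dist (d0 : measure_display) (T : measurableType d0)
    (P : probability T R) (q eps : nat -> T -> R) (xs : nat -> T -> V) :
  bernoulli_seq P p q -> indep_q_eps P q eps ->
  boke_plus_run X f Psi schedule_bandwidth beta T0 q eps xs ->
  {ae P, forall w, ereal_inf (range (fill_dist X (fun i => xs i w))) = 0%E}.
Proof.
move=> q_bern indep run.
pose failing_from K := \bigcap_(k in [set k | (K <= k)%N])
  some_block_without_ucb q (schedule_start k) (L k) (N k).
apply: negligibleS (negligible_bigcup (F := failing_from) _) => [w /= inf_ne0|K].
  apply: contrapT => not_failing; apply: inf_ne0.
  apply: (ereal_eq0_le_vanishing (u := fun k => RPsi * harmonic k)).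
  - by apply/ereal_infP => _ [t _ <-]; apply: fill_dist_ge0.
  - by rewrite -(mulr0 RPsi); apply: cvgM; [exact: cvg_cst|exact: cvg_harmonic].
  move=> K; apply: contrapT => never; apply: not_failing; exists K => // k Kk.
  apply: contrapT => not_some.
  have hit j jN := ucb_step_in_each_block q_bern not_some (k := j) jN.
  have [t fill_le] := ucb_window_fill_dist_le Psi_A3 Psi_pos run (harmonic_gt0 k)
    (@packN k) (leq_addr _ _) (@schedule_bandwidth_on_step k) hit.
  apply: never; exists k => //; apply: ge_ereal_inf.
  by exists (fill_dist X (fun i => xs i w) t).
apply: negligible_bigcap_small => [k|e e0].
  exact: measurable_some_block_without_ucb.
have [K' _ small] := cvgr_dist_lt _ _ cvg_harmonic _ e0.
exists (maxn K K'); first exact: leq_maxl.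
apply: le_trans (probability_some_block_without_ucb_le q_bern indep _ _ _) _.
rewrite lee_fin (le_trans (L_small _)) // ltW //.
by have := small _ (leq_maxr K K'); rewrite /= sub0r normrN ger0_norm ?harmonic_ge0.
Qed.

End vanishing_bandwidth.

Theorem mainTheorem5 (R : realType) (d : nat) (X : set 'rV[R]_d)
  (f : 'rV[R]_d -> R) (Psi : 'rV[R]_d -> R) (RPsi MPsi vs : R)
  (beta : nat -> R) (p : R) (T0 : nat) :
  A1 X -> {within X, continuous f} -> A3 Psi RPsi MPsi -> 0 <= vs ->
  (forall t, 0 < beta t) -> beta @ \oo --> +oo ->
  0 < p <= 1 -> (1 <= T0)%N ->
  (* (i) fixed bandwidth *)
  (forall ell : R, 0 < ell ->
    forall (d0 : measure_display) (T : measurableType d0) (P : probability T R)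
      (q eps : nat -> T -> R) (xs : nat -> T -> 'rV[R]_d),
      bernoulli_seq P p q -> subgaussian_noise P vs eps -> indep_q_eps P q eps ->
      boke_plus_run X f Psi (fun=> ell) beta T0 q eps xs ->
      {ae P, forall w, (ereal_inf (range (fill_dist X (fun i => xs i w)))
                        <= (RPsi * ell)%:E)%E})
  /\
  (* (ii) some vanishing bandwidth sequence *)
  (exists ell : nat -> R, (forall t, 0 < ell t) /\ ell @ \oo --> 0 /\
    forall (d0 : measure_display) (T : measurableType d0) (P : probability T R)
      (q eps : nat -> T -> R) (xs : nat -> T -> 'rV[R]_d),
      bernoulli_seq P p q -> subgaussian_noise P vs eps -> indep_q_eps P q eps ->
      boke_plus_run X f Psi ell beta T0 q eps xs ->
      {ae P, forall w, ereal_inf (range (fill_dist X (fun i => xs i w))) = 0%E}).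
Proof.
move=> [cX [_ [x0 /interior_subset Xx0]]] _ Psi_A3 _ _ _ p01 _.
split=> [ell ell0 d0 T P q eps xs q_bern _ indep|].
  exact: fixed_bandwidth_fill_dist_le cX Psi_A3 p01 ell0 q_bern indep.
have [r0 r00 Psi_pos] := A3_Psi_gt0_near0 Psi_A3.
have q01 : 0 <= 1 - p < 1 by case/andP: p01 => p0 p1; apply/andP; split; lra.
have /choice[N packN] k : exists N, packing_bound X (r0 * harmonic k) N.
  exact/compact_packing_bound/mulr_gt0/harmonic_gt0.
have /choice[L /all_and2[L_gt0 L_small]] k :
    exists L, (0 < L)%N /\ (N k).+1%:R * (1 - p) ^+ L <= harmonic k.
  have [m small] := geometric_eventually_le (N k).+1%:R q01 (harmonic_gt0 k).
  by exists m.+1; split => //; apply: small.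
exists (@schedule_bandwidth R T0 N L); split; first exact: schedule_bandwidth_gt0.
split; first exact: schedule_bandwidth_cvg0.
move=> d0 T P q eps xs q_bern _ indep run.
exact: (schedule_bandwidth_fill_dist (f := f) (beta := beta) (ex_intro _ x0 Xx0)
  Psi_A3 Psi_pos packN L_gt0 L_small q_bern indep run).
Qed.
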